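(* Let $q\in(0,1]$. Then $\omega(R(SO_q(3)))=q^{-4}$.
   Context: $R(SO_q(3))$ is the fusion algebra with irreducible objects $I=\mathbb{Z}_+$, unit $0$, trivial involution, product $m\cdot n=\sum_{k=|m-n|}^{m+n}k$, and dimension $d(n)=[2n+1]_q$, where $[x]_q=\frac{q^{-x}-q^x}{q^{-1}-q}$ for $0<q<1$ and $[x]_1=x$. For $A\subseteq I$, $|A|=\sum_{\beta\in A}d(\beta)^2$. A finite generating set is a finite $X\subseteq I$ such that every $\beta\in I$ has nonzero coefficient in some product $x_1\cdots x_n$, $x_i\in X$; $\ell_X(0)=0$, otherwise $\ell_X(\beta)$ is the least such $n\ge1$; $B_X(n)=\{\beta:\ell_X(\beta)\le n\}$; $\omega_X=\lim_n|B_X(n)|^{1/n}$ (exists) and $\omega=\inf_X\omega_X$ over finite generating sets. *)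

From HB Require Import structures.
From mathcomp Require Import all_boot all_order all_algebra.
From mathcomp Require Import all_classical all_reals all_analysis.
Set Implicit Arguments. Unset Strict Implicit. Unset Printing Implicit Defensive.
Import Order.TTheory GRing.Theory Num.Theory.

(* Elements of the (Z_+-span of the) fusion algebra R(SO_q(3)) with
   irreducibles I = nat are represented as formal sums with nonnegative
   integer coefficients, i.e. multisets of irreducibles given as [seq nat];
   the coefficient of beta in s is [count_mem beta s]. *)

(* m . n = sum_{k=|m-n|}^{m+n} k *)
Definition fus_irr (m n : nat) : seq nat :=
  iota (if (m <= n)%N then n - m else m - n)%N
       ((m + n) - (if (m <= n)%N then n - m else m - n)).+1.

Definition fus_mul (s t : seq nat) : seq nat :=
  flatten [seq fus_irr a b | a <- s, b <- t].

(* product x_1 ... x_n (empty product = unit 0) *)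
Definition fus_prod (xs : seq nat) : seq nat :=
  foldl (fun acc x => fus_mul acc [:: x]) [:: 0] xs.

Fixpoint words (X : seq nat) (k : nat) : seq (seq nat) :=
  match k with
  | 0 => [:: [::]]
  | k'.+1 => [seq x :: w | x <- X, w <- words X k']
  end.

Definition appears_in_len (X : seq nat) (k beta : nat) : bool :=
  has (fun w => beta \in fus_prod w) (words X k).

Definition generating (X : seq nat) : Prop :=
  forall beta : nat, exists2 xs : seq nat,
    all (fun x => x \in X) xs && (0 < size xs) & beta \in fus_prod xs.

(* beta \in B_X(n), i.e. l_X(beta) <= n, where l_X(0) = 0 and otherwise
   l_X(beta) is the least k >= 1 with beta appearing in a length-k word *)
Definition inB (X : seq nat) (n beta : nat) : bool :=
  (beta == 0) || has (fun k => appears_in_len X k beta) (iota 1 n).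

Local Open Scope ring_scope.

Definition qint {R : realType} (q : R) (x : nat) : R :=
  if q == 1 then x%:R else (q ^- x - q ^+ x) / (q^-1 - q).

Definition qdim {R : realType} (q : R) (n : nat) : R := qint q (2 * n).+1.

(* every element of B_X(n) is <= n * max X, so this bounded sum is |B_X(n)| *)
Definition Bbound (X : seq nat) (n : nat) : nat := (n * \max_(x <- X) x).+1.

Definition sizeB {R : realType} (q : R) (X : seq nat) (n : nat) : R :=
  \sum_(beta < Bbound X n | inB X n beta) qdim q beta ^+ 2.

Definition omegaX {R : realType} (q : R) (X : seq nat) : R :=
  limn (fun n : nat => powR (sizeB q X n) (n%:R)^-1).

Definition omega {R : realType} (q : R) : R :=
  inf [set omegaX q X | X in generating].

(* If m is the largest element of a finite set X of irreducibles, the top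
   irreducible n*m occurs in x_max^n and nothing larger occurs in any product of
   n generators, so B_X(n) is a subset of [0, n*m] containing n*m.  Since
   q^(-2k) <= [2k+1]_q <= (2k+1) q^(-2k), the size |B_X(n)| is q^(-4nm) up to a
   factor polynomial in n, whence omega_X = q^(-4m).  Generating sets have
   m >= 1 and {1} is generating, so omega = q^(-4). *)

From mathcomp Require Import all_boot all_order all_algebra.
From mathcomp Require Import all_classical all_reals all_analysis.
From mathcomp Require Import zify ring lra.
Import Order.TTheory GRing.Theory Num.Theory numFieldNormedType.Exports.

Lemma mem_fus_irr a c b :
  (b \in fus_irr a c) = (if a <= c then c - a <= b <= c + a else a - c <= b <= a + c).
Proof. by rewrite /fus_irr mem_iota; case: (leqP a c) => _; apply/idP/idP; lia. Qed.

Lemma fus_mulP (s t : seq nat) b :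
  reflect (exists a c, [/\ a \in s, c \in t & b \in fus_irr a c]) (b \in fus_mul s t).
Proof.
apply: (iffP flattenP) => [[u /allpairsPdep [a [c [sa tc ->]]]] hb | [a [c [sa tc hb]]]].
  by exists a, c.
by exists (fus_irr a c) => //; apply/allpairsPdep; exists a, c.
Qed.

Lemma mem_fus_prod_nseq k m : k * m \in fus_prod (nseq k m).
Proof.
rewrite -[k * m]add0n /fus_prod.
elim: k 0 [:: 0] (mem_head 0 [::]) => [|k IHk] a s sa /=; first by rewrite addn0.
rewrite mulSn addnA; apply: IHk; apply/fus_mulP; exists a, m.
by rewrite mem_fus_irr mem_head; split=> //; case: leqP; lia.
Qed.

Lemma fus_prod_nseq0 k : fus_prod (nseq k 0) = [:: 0].
Proof. by elim: k. Qed.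

Lemma mem_words_nseq (X : seq nat) x k : x \in X -> nseq k x \in words X k.
Proof.
move=> Xx; elim: k => [|k IHk] /=; first exact: mem_head.
by apply/allpairsPdep; exists x, (nseq k x).
Qed.

Lemma mem_bigmax_seq (s : seq nat) : s != [::] -> \max_(x <- s) x \in s.
Proof.
elim: s => [//|x s IHs] _; rewrite big_cons inE.
have [->|s_neq0] := eqVneq s [::]; first by rewrite big_nil maxn0 eqxx.
by case: (leqP x (\max_(y <- s) y)) => _; rewrite ?eqxx ?IHs ?orbT.
Qed.

Lemma inB_mul_max X n : 0 < n -> inB X n (n * \max_(x <- X) x).
Proof.
move=> n_gt0; rewrite /inB; have [->|X_neq0] := eqVneq X [::].
  by rewrite big_nil muln0.
apply/orP; right; apply/hasP; exists n; first by rewrite mem_iota; lia.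
apply/hasP; exists (nseq n (\max_(x <- X) x)); last exact: mem_fus_prod_nseq.
exact/mem_words_nseq/mem_bigmax_seq.
Qed.

Lemma generating_max_gt0 X : generating X -> 0 < \max_(x <- X) x.
Proof.
move=> genX; rewrite lt0n; apply/negP => /eqP max0.
have [xs /andP [xsX _]] := genX 1.
suff /all_pred1P -> : all (pred1 0) xs by rewrite fus_prod_nseq0.
apply/allP => x xs_x; rewrite /= -leqn0 -max0.
by apply: leq_bigmax_seq => //; apply: (allP xsX).
Qed.

Lemma generating1 : generating [:: 1].
Proof.
move=> [|b]; first by exists [:: 1; 1].
exists (nseq b.+1 1); last by have := mem_fus_prod_nseq b.+1 1; rewrite muln1.
rewrite size_nseq andbT; apply/allP => x.
by rewrite mem_nseq => /andP [_ /eqP ->]; exact: mem_head.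
Qed.

Local Open Scope ring_scope.
Local Open Scope classical_set_scope.

Section QuantumDimension.
Context {R : realType} {q : R}.
Hypothesis q_gt0 : 0 < q.

Lemma qint_geom x : qint q x.+1 = q^-1 ^+ x * \sum_(i < x.+1) (q ^+ 2) ^+ i.
Proof.
rewrite /qint; have [->|q_neq1] := eqVneq q 1.
  rewrite invr1 expr1n mul1r; under eq_bigr do rewrite !expr1n.
  by rewrite sumr_const card_ord.
have q_neq0 : q != 0 by rewrite gt_eqF.
have q2_neq1 : q ^+ 2 - 1 != 0.
  by rewrite subr_eq0 sqrf_eq1 negb_or q_neq1 /= gt_eqF // (lt_trans _ q_gt0) ?ltrN10.
rewrite -[\sum_(i < _) _](mulKf q2_neq1) -subrX1 exprAC exprVn exprS.
field; rewrite q_neq0 q2_neq1 expf_neq0 //=.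
by rewrite mulNr -expr2 -opprB oppr_eq0.
Qed.

Lemma qdim_ge k : q^-1 ^+ (2 * k) <= qdim q k.
Proof.
have q2_ge0 : 0 <= q ^+ 2 by rewrite exprn_ge0 ?ltW.
rewrite /qdim qint_geom ler_pMr ?exprn_gt0 ?invr_gt0 // big_ord_recl expr0 lerDl.
by apply: sumr_ge0 => i _; rewrite exprn_ge0.
Qed.

Lemma qdim_ge0 k : 0 <= qdim q k.
Proof. by apply: le_trans (qdim_ge k); rewrite exprn_ge0 ?invr_ge0 ?ltW. Qed.

Hypothesis q_le1 : q <= 1.

Lemma qdim_le k : qdim q k <= (2 * k).+1%:R * q^-1 ^+ (2 * k).
Proof.
rewrite /qdim qint_geom mulrC ler_wpM2r ?exprn_ge0 ?invr_ge0 ?(ltW q_gt0) //.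
have -> : (2 * k).+1%:R = \sum_(i < (2 * k).+1) (1 : R) by rewrite sumr_const card_ord.
have q2_ge0 : 0 <= q ^+ 2 by rewrite exprn_ge0 ?(ltW q_gt0).
by apply: ler_sum => i _; rewrite !exprn_ile1 ?(ltW q_gt0).
Qed.

End QuantumDimension.

Section RootAsymptotics.
Variable R : realType.

Lemma bernoulli_ineq (e : R) n : 0 <= e -> 1 + e *+ n <= (1 + e) ^+ n.
Proof.
move=> e_ge0; elim: n => [|n IHn]; first by rewrite mulr0n addr0.
rewrite exprS mulrS (le_trans _ (ler_wpM2l _ IHn)) ?addr_ge0 //.
have := mulr_ge0 e_ge0 (mulrn_wge0 n e_ge0); nra.
Qed.

Lemma exprD1_le (e : R) m : 0 <= e -> e <= 1 -> (1 + e) ^+ m <= 1 + (2 ^+ m - 1) * e.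
Proof.
move=> e_ge0 e_le1; elim: m => [|m IHm]; first by rewrite subrr mul0r addr0.
have two_m_ge1 : 1 <= 2 ^+ m :> R by rewrite exprn_ege1 ?ler1n.
rewrite exprS (le_trans (ler_wpM2l _ IHm)) ?addr_ge0 //.
have : 0 <= (2 ^+ m - 1) * (e * (1 - e)).
  by rewrite !mulr_ge0 ?subr_ge0.
rewrite exprS; nra.
Qed.

Lemma powR_exprn_inv (a : R) n : 0 <= a -> (0 < n)%N -> (a ^+ n) `^ n%:R^-1 = a.
Proof.
move=> a_ge0 n_gt0; rewrite -powR_mulrn // -powRrM mulfV ?powRr1 //.
by rewrite pnatr_eq0 -lt0n.
Qed.

Lemma powR_invn_le (a b : R) n : 0 <= a -> 0 <= b -> (0 < n)%N ->
  a <= b ^+ n -> a `^ n%:R^-1 <= b.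
Proof.
move=> a_ge0 b_ge0 n_gt0 le_ab; rewrite -(powR_exprn_inv _ _ b_ge0 n_gt0).
by rewrite ge0_ler_powR ?invr_ge0 ?nnegrE ?exprn_ge0.
Qed.

Lemma powR_invn_ge (a b : R) n : 0 <= b -> (0 < n)%N -> b ^+ n <= a ->
  b <= a `^ n%:R^-1.
Proof.
move=> b_ge0 n_gt0 le_ba; rewrite -{1}(powR_exprn_inv _ _ b_ge0 n_gt0).
by rewrite ge0_ler_powR ?invr_ge0 ?nnegrE ?exprn_ge0 // (le_trans _ le_ba) ?exprn_ge0.
Qed.

Lemma cvg_root_poly c k : (0 < c)%N ->
  (c * n ^ k)%N%:R `^ n%:R^-1 @[n --> \oo] --> (1 : R).
Proof.
move=> c_gt0; apply/cvgrPdist_le => eps eps_gt0.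
set e := Num.min 1 (eps / 2 ^+ k.+1).
have e_gt0 : 0 < e by rewrite lt_min ltr01 divr_gt0 ?exprn_gt0.
have e_le1 : e <= 1 by rewrite ge_min lexx.
have e_small : (2 ^+ k.+1 - 1) * e <= eps.
  apply: le_trans (_ : 2 ^+ k.+1 * e <= _).
    by rewrite ler_wpM2r ?(ltW e_gt0) // gerDl oppr_le0.
  by rewrite mulrC -ler_pdivlMr ?exprn_gt0 // ge_min lexx orbT.
near=> n.
have n_gt0 : (0 < n)%N by near: n; exact: nbhs_infty_ge.
have n_large : c%:R <= n%:R * e ^+ k.+1.
  by rewrite -ler_pdivrMr ?exprn_gt0 //; near: n; exact: nbhs_infty_ger.
have poly_ge1 : 1 <= (c * n ^ k)%N%:R :> R by rewrite ler1n muln_gt0 c_gt0 expn_gt0 n_gt0.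
have root_ge1 : 1 <= (c * n ^ k)%N%:R `^ n%:R^-1 :> R.
  by rewrite powR_invn_ge ?expr1n.
have poly_le : (c * n ^ k)%N%:R <= ((1 + e) ^+ k.+1) ^+ n.
  rewrite natrM natrX -exprM mulnC exprM.
  apply: le_trans (ler_wpM2r (exprn_ge0 _ (ler0n _ _)) n_large) _.
  have e_ge0 := ltW e_gt0.
  (* c n^k <= (n e)^(k+1) <= (1 + e)^(n (k+1)), the last step by Bernoulli *)
  rewrite mulrAC -exprS -exprMn lerXn2r ?nnegrE ?mulr_ge0 ?exprn_ge0 ?addr_ge0 //.
  by rewrite (le_trans _ (bernoulli_ineq _ n e_ge0)) // mulr_natl lerDr.
have root_le : (c * n ^ k)%N%:R `^ n%:R^-1 <= (1 + e) ^+ k.+1.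
  by apply: powR_invn_le; rewrite ?exprn_ge0 ?addr_ge0 ?(ltW e_gt0).
have := exprD1_le _ k.+1 (ltW e_gt0) e_le1.
rewrite ler0_norm ?subr_le0 // opprB; lra.
Unshelve. all: end_near.
Qed.

Lemma cvg_root_sandwich (u : R^nat) (L : R) c k : 0 < L -> (0 < c)%N ->
  (forall n, (0 < n)%N -> L ^+ n <= u n <= (c * n ^ k)%N%:R * L ^+ n) ->
  u n `^ n%:R^-1 @[n --> \oo] --> L.
Proof.
move=> L_gt0 c_gt0 u_bounds.
have L_ge0 := ltW L_gt0.
apply: (@squeeze_cvgr _ _ _ _ (fun=> L) (fun n => (c * n ^ k)%N%:R `^ n%:R^-1 * L)).
- near=> n.
  have n_gt0 : (0 < n)%N by near: n; exact: nbhs_infty_ge.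
  have /andP [u_ge u_le] := u_bounds n n_gt0.
  have u_ge0 : 0 <= u n by apply: le_trans u_ge; rewrite exprn_ge0.
  rewrite powR_invn_ge //=.
  rewrite -[X in _ <= _ * X](powR_exprn_inv _ _ L_ge0 n_gt0) -powRM ?exprn_ge0 //.
  by rewrite ge0_ler_powR ?invr_ge0 ?nnegrE ?mulr_ge0 ?exprn_ge0.
- exact: cvg_cst.
- by rewrite -[X in _ --> X]mul1r; apply: cvgM; [exact: cvg_root_poly | exact: cvg_cst].
Unshelve. all: end_near.
Qed.

End RootAsymptotics.

Lemma inf_attained (R : realType) (E : set R) x : E x -> lbound E x -> inf E = x.
Proof.
move=> Ex lbx; apply/eqP; rewrite eq_le lb_le_inf ?andbT //; last by exists x.
by apply: ge_inf => //; exists x.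
Qed.

Section BallVolume.
Variables (R : realType) (q : R) (X : seq nat) (n : nat).
Hypotheses (q_gt0 : 0 < q) (n_gt0 : (0 < n)%N).
Let M := \max_(x <- X) x.

Lemma sizeB_ge : (q^-1 ^+ (4 * M)) ^+ n <= sizeB q X n.
Proof.
rewrite /sizeB /Bbound (bigD1 ord_max) ?inB_mul_max //=.
apply: ler_wpDr; first by apply: sumr_ge0 => i _; rewrite exprn_ge0 ?qdim_ge0.
rewrite -!exprM (_ : (4 * M * n = 2 * (n * M) * 2)%N); last by lia.
rewrite exprM lerXn2r ?nnegrE ?exprn_ge0 ?invr_ge0 ?(ltW q_gt0) ?qdim_ge0 //.
exact: qdim_ge.
Qed.

Hypothesis q_le1 : q <= 1.

Lemma sizeB_le : sizeB q X n <= ((2 * M).+1 ^ 3 * n ^ 3)%N%:R * (q^-1 ^+ (4 * M)) ^+ n.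
Proof.
set N := (n * M)%N; have qV_ge1 : 1 <= q^-1 by rewrite invf_ge1.
have qV_ge0 : 0 <= q^-1 := le_trans ler01 qV_ge1.
apply: le_trans (_ : \sum_(i < N.+1) ((2 * N).+1%:R * q^-1 ^+ (2 * N)) ^+ 2 <= _).
  rewrite /sizeB /Bbound big_mkcond ler_sum // => i _.
  have i_le : (i <= N)%N by rewrite -ltnS.
  case: ifP => _; last by rewrite exprn_ge0 ?mulr_ge0 ?exprn_ge0.
  rewrite lerXn2r ?nnegrE ?qdim_ge0 ?mulr_ge0 ?exprn_ge0 //.
  apply: le_trans (qdim_le q_gt0 q_le1 i) _.
  rewrite ler_pM ?exprn_ge0 ?ler0n ?ler_nat ?ler_weXn2l //; lia.
rewrite sumr_const card_ord exprMn -!exprM (_ : (2 * N * 2 = 4 * M * n)%N); last by lia.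
rewrite -mulrnAl ler_wpM2r ?exprn_ge0 // -natrX -mulr_natr -natrM ler_nat /N.
nia.
Qed.

End BallVolume.

Lemma omegaX_eq (R : realType) (q : R) X : 0 < q -> q <= 1 ->
  omegaX q X = q^-1 ^+ (4 * \max_(x <- X) x).
Proof.
move=> q_gt0 q_le1; apply: cvg_lim => //.
apply: (@cvg_root_sandwich _ _ _ ((2 * \max_(x <- X) x).+1 ^ 3) 3).
- by rewrite exprn_gt0 ?invr_gt0.
- by rewrite expn_gt0.
- by move=> n n_gt0; rewrite sizeB_ge ?sizeB_le.
Qed.

Theorem proposition5p4 (R : realType) (q : R) (hq0 : 0 < q) (hq1 : q <= 1) :
  omega q = q ^- 4.
Proof.
rewrite /omega -exprVn; apply: inf_attained.
  exists [:: 1%N]; first exact: generating1.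
  by rewrite omegaX_eq // big_cons big_nil.
move=> _ [X genX <-]; rewrite omegaX_eq // ler_weXn2l ?invf_ge1 //.
by rewrite leq_pmulr ?generating_max_gt0.
Qed.
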